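(* Let $\lambda,\mu$ be partitions and $x$ an indeterminate. Put $$X_{\lambda\mu}(x):=\prod_{(i,j)\in[\mu]}(j-i-x)\prod_{(i,j)\in [\lambda]}\biggl((j-i-\mu_1+x)\prod_{1\le k\le\mu_1}\frac{j-i+\bar{\mu}_k-k+1+x}{j-i+\bar{\mu}_k-k+x}\biggr)$$ and $$Z_{\lambda\mu}(x):=\prod_{(i,j) \in [\lambda]}(h_{i,j}^{\lambda,\mu}+x)\prod_{(i,j) \in [\mu]}(h_{i,j}^{\mu,\lambda}-x).$$ Then $X_{\lambda\mu}(x)=Z_{\lambda\mu}(x)$.
   Context: For a partition $\lambda$, $[\lambda]=\{(i,j): i\ge1,\ 1\le j\le\lambda_i\}$ is its diagram and $\bar\lambda$ is the conjugate partition ($\bar\lambda_k$ = number of $i$ with $\lambda_i\ge k$). For partitions $\lambda,\mu$ and a node $(i,j)\in[\lambda]$, the generalized hook length is $h^{\lambda,\mu}_{i,j}=\lambda_i-i+\bar\mu_j-j+1$. *)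

From HB Require Import structures.
From mathcomp Require Import all_boot all_order all_algebra fraction.
Set Implicit Arguments. Unset Strict Implicit. Unset Printing Implicit Defensive.
Import Order.TTheory GRing.Theory Num.Theory.
Local Open Scope ring_scope.

(* A partition is a weakly decreasing finite sequence of naturals
   (zero parts are harmless: they contribute no nodes). *)
Definition is_partition (l : seq nat) : bool := sorted geq l.

(* lambda_i, 1-indexed; 0 for i beyond the length *)
Definition part (l : seq nat) (i : nat) : nat := nth 0%N l i.-1.

Definition conjp (l : seq nat) (k : nat) : nat := count (fun a => (k <= a)%N) l.

Definition prod_diag (F : fieldType) (l : seq nat) (f : nat -> nat -> F) : F :=
  \prod_(1 <= i < (size l).+1) \prod_(1 <= j < (part l i).+1) f i j.

Definition ghook (F : fieldType) (l m : seq nat) (i j : nat) : F :=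
  (part l i)%:R - i%:R + (conjp m j)%:R - j%:R + 1.

Definition Xlm (F : fieldType) (l m : seq nat) (x : F) : F :=
  prod_diag m (fun i j => j%:R - i%:R - x) *
  prod_diag l (fun i j =>
    (j%:R - i%:R - (part m 1)%:R + x) *
    \prod_(1 <= k < (part m 1).+1)
      ((j%:R - i%:R + (conjp m k)%:R - k%:R + 1 + x) /
       (j%:R - i%:R + (conjp m k)%:R - k%:R + x))).

Definition Zlm (F : fieldType) (l m : seq nat) (x : F) : F :=
  prod_diag l (fun i j => ghook F l m i j + x) *
  prod_diag m (fun i j => ghook F m l i j - x).

Definition ratfun := {fraction {poly rat}}.
Definition xind : ratfun := @FracField.tofrac {poly rat} 'X.

From HB Require Import structures.
From mathcomp Require Import all_boot all_order all_algebra fraction.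
From mathcomp Require Import ring.
Set Implicit Arguments. Unset Strict Implicit. Unset Printing Implicit Defensive.
Local Open Scope ring_scope.
Import GRing.Theory.

(* Both sides obey the same recursion in the number of rows.  If lambda_1 >=
   mu_1, deleting the first row of lambda turns x into x - 1 and divides both
   X and Z by prod_(j <= lambda_1) (h^{lambda,mu}_{1,j} + x); otherwise
   deleting the first row of mu turns x into x + 1 and divides both by
   prod_(j <= mu_1) (h^{mu,lambda}_{1,j} - x).  For Z this is a direct
   inspection of the hook lengths; for X the ratios over k telescope along
   the row, and the column products of [mu] absorb the boundary terms.  The
   telescoping only needs x + n <> 0 for every integer n, which holds for the
   indeterminate. *)

Lemma part_head a l : part (a :: l) 1 = a.
Proof. by []. Qed.

Lemma part_cons a l i : (0 < i)%N -> part (a :: l) i.+1 = part l i.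
Proof. by case: i. Qed.

Lemma conjp_cons a l k : conjp (a :: l) k = ((k <= a)%N + conjp l k)%N.
Proof. by []. Qed.

Lemma partition_leq_head a l : is_partition (a :: l) -> all (geq a) (a :: l).
Proof.
move=> al_part /=; rewrite leqnn /=.
by apply: (order_path_min _ al_part) => u v w vu wv; apply: leq_trans wv vu.
Qed.

Lemma part_leq_head l i : is_partition l -> (part l i <= part l 1)%N.
Proof.
case: l => [|a l]; first by rewrite /part nth_nil.
move=> /partition_leq_head /allP le_a; rewrite /part /=.
have [lt_i|le_i] := ltnP i.-1 (size (a :: l)); first by apply: le_a; apply: mem_nth.
by rewrite nth_default.
Qed.

Lemma conjp_eq0 l k : is_partition l -> (part l 1 < k)%N -> conjp l k = 0%N.
Proof.
case: l => [|a l] // /partition_leq_head /allP le_a lt_ak.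
apply/eqP; rewrite -leqn0 leqNgt -has_count; apply/hasPn => b /le_a /= le_ba.
by rewrite -ltnNge (leq_ltn_trans le_ba).
Qed.

Lemma telescope_prodf_leq (F : fieldType) n m (f : nat -> F) : (n <= m)%N ->
    (forall k, (n <= k <= m)%N -> f k != 0) ->
  \prod_(n <= k < m) (f k.+1 / f k) = f m / f n.
Proof.
rewrite leq_eqVlt => /predU1P[<- nz_f | lt_nm nz_f].
  by rewrite big_geq // divff // nz_f ?leqnn.
by apply: telescope_prodf => // k /andP[/ltnW le_nk /ltnW le_km]; rewrite nz_f ?le_nk.
Qed.

Section DiagramProducts.
Variable F : fieldType.
Implicit Types (l m : seq nat) (f g : nat -> nat -> F).

Lemma prod_diag_nil f : prod_diag [::] f = 1.
Proof. by rewrite /prod_diag big_geq. Qed.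

Lemma prod_diag_cons a l f :
  prod_diag (a :: l) f =
  (\prod_(1 <= j < a.+1) f 1%N j) * prod_diag l (fun i j => f i.+1 j).
Proof.
rewrite /prod_diag /= big_ltn //; congr (_ * _).
by rewrite big_add1 /=; apply: eq_big_nat => i /andP[lt0i _]; rewrite part_cons.
Qed.

Lemma eq_prod_diag l f g :
    (forall i j, (0 < i <= size l)%N -> (0 < j <= part l i)%N -> f i j = g i j) ->
  prod_diag l f = prod_diag l g.
Proof.
move=> eq_fg; apply: eq_big_nat => i /andP[lt0i lt_il].
by apply: eq_big_nat => j /andP[lt0j lt_jl]; apply: eq_fg; apply/andP; rewrite -ltnS.
Qed.

Lemma prod_diagM l f g :
  prod_diag l (fun i j => f i j * g i j) = prod_diag l f * prod_diag l g.
Proof. by rewrite /prod_diag -big_split; apply: eq_bigr => i _; apply: big_split. Qed.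

Lemma prod_diag_columns m f : is_partition m ->
  prod_diag m f =
  \prod_(1 <= j < (part m 1).+1) \prod_(1 <= i < (conjp m j).+1) f i j.
Proof.
elim: m f => [|b m IH] f m_part; first by rewrite prod_diag_nil /part /= big_geq.
have m'_part : is_partition m := path_sorted m_part.
have le_mb : (part m 1 <= b)%N := part_leq_head 2 m_part.
rewrite prod_diag_cons IH // part_head.
rewrite [RHS](eq_big_nat _ _
  (F2 := fun j => f 1%N j * \prod_(1 <= i < (conjp m j).+1) f i.+1 j)); last first.
  by move=> j /andP[_]; rewrite ltnS conjp_cons => -> /=; rewrite big_ltn // big_add1.
rewrite big_split /= [X in _ = _ * X](big_cat_nat (n := (part m 1).+1)) //=.
rewrite [X in _ * (_ * X)]big_nat_cond [X in _ * (_ * X)]big1 ?mulr1 //.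
by move=> j /andP[/andP[lt_mj _] _]; rewrite conjp_eq0 // big_geq.
Qed.

End DiagramProducts.

Section HookRows.
Variable F : fieldType.

Definition hook_row (a : nat) (m : seq nat) (x : F) : F :=
  \prod_(1 <= j < a.+1) (a%:R + (conjp m j)%:R - j%:R + x).

Lemma hook_row_split a m x : is_partition m -> (part m 1 <= a)%N ->
  hook_row a m x =
  \prod_(1 <= k < (part m 1).+1) (a%:R + (conjp m k)%:R - k%:R + x) *
  \prod_((part m 1).+1 <= j < a.+1) (a%:R - j%:R + x).
Proof.
move=> m_part le_ma; rewrite /hook_row (big_cat_nat (n := (part m 1).+1)) //=.
by congr (_ * _); apply: eq_big_nat => j /andP[lt_mj _]; rewrite conjp_eq0 //; ring.
Qed.

Lemma ZlmC l m (x : F) : Zlm l m x = Zlm m l (- x).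
Proof. by rewrite /Zlm opprK mulrC. Qed.

Lemma Zlm_cons_l a l m (x : F) : is_partition m -> (part m 1 <= a)%N ->
  Zlm (a :: l) m x = Zlm l m (x - 1) * hook_row a m x.
Proof.
move=> m_part le_ma; rewrite /Zlm prod_diag_cons.
have -> : prod_diag m (fun i j => ghook F m (a :: l) i j - x) =
          prod_diag m (fun i j => ghook F m l i j - (x - 1)).
  apply: eq_prod_diag => i j _ /andP[_ le_jm].
  have le_ja : (j <= a)%N := leq_trans le_jm (leq_trans (part_leq_head i m_part) le_ma).
  by rewrite /ghook conjp_cons le_ja /=; ring.
have -> : prod_diag l (fun i j => ghook F (a :: l) m i.+1 j + x) =
          prod_diag l (fun i j => ghook F l m i j + (x - 1)).
  by apply: eq_prod_diag => i j /andP[lt0i _] _; rewrite /ghook part_cons //; ring.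
have -> : \prod_(1 <= j < a.+1) (ghook F (a :: l) m 1 j + x) = hook_row a m x.
  by apply: eq_bigr => j _; rewrite /ghook part_head; ring.
ring.
Qed.

Lemma Zlm_cons_r l b m (x : F) : is_partition l -> (part l 1 <= b)%N ->
  Zlm l (b :: m) x = Zlm l m (x + 1) * hook_row b l (- x).
Proof. by move=> l_part le_lb; rewrite ZlmC Zlm_cons_l // [Zlm l m _]ZlmC opprD. Qed.

End HookRows.

Section GenericShifts.
Variable F : fieldType.

Definition generic (x : F) := forall p q : nat, x + (p%:R - q%:R) != 0.

Lemma generic_neq0 (x y : F) p q : generic x -> y = x + (p%:R - q%:R) -> y != 0.
Proof. by move=> x_gen ->. Qed.

Lemma genericD (x : F) p q : generic x -> generic (x + (p%:R - q%:R)).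
Proof.
move=> x_gen p' q'.
have -> : x + (p%:R - q%:R) + (p'%:R - q'%:R) = x + ((p + p')%:R - (q + q')%:R).
  by rewrite !natrD; ring.
exact: x_gen.
Qed.

Lemma generic_subr1 (x : F) : generic x -> generic (x - 1).
Proof. by move/(genericD 0 1); rewrite sub0r. Qed.

Lemma generic_addr1 (x : F) : generic x -> generic (x + 1).
Proof. by move/(genericD 1 0); rewrite subr0. Qed.

End GenericShifts.

Section XRecursion.
Variable F : fieldType.
Implicit Types (x y : F) (l m : seq nat).

Definition content_prod m x : F := prod_diag m (fun i j => j%:R - i%:R - x).

Definition Xweight m y : F :=
  (y - (part m 1)%:R) * \prod_(1 <= k < (part m 1).+1)
     ((y + (conjp m k)%:R - k%:R + 1) / (y + (conjp m k)%:R - k%:R)).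

Lemma Xlm_Xweight l m x :
  Xlm l m x = content_prod m x * prod_diag l (fun i j => Xweight m (j%:R - i%:R + x)).
Proof.
rewrite /Xlm /content_prod; congr (_ * _); apply: eq_prod_diag => i j _ _.
by rewrite /Xweight; congr (_ * _); [ring | apply: eq_bigr => k _; congr (_ / _); ring].
Qed.

Lemma column_content_shift x (k nu : nat) :
  (\prod_(1 <= i < nu.+1) (k%:R - i%:R - x)) * (x - k%:R) =
  (\prod_(1 <= i < nu.+1) (k%:R - i%:R - (x - 1))) * (x + nu%:R - k%:R).
Proof.
elim: nu => [|n IH]; first by rewrite !big_geq //; ring.
rewrite [in LHS]big_nat_recr //= [in RHS]big_nat_recr //=.
transitivity ((\prod_(1 <= i < n.+1) (k%:R - i%:R - x)) * (x - k%:R) *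
              (k%:R - n.+1%:R - x)); first ring.
by rewrite IH; ring.
Qed.

Lemma content_prod_shift m x : is_partition m ->
  content_prod m x * \prod_(1 <= k < (part m 1).+1) (x - k%:R) =
  content_prod m (x - 1) * \prod_(1 <= k < (part m 1).+1) (x + (conjp m k)%:R - k%:R).
Proof.
move=> m_part; rewrite /content_prod !prod_diag_columns // -!big_split.
by apply: eq_bigr => k _; apply: column_content_shift.
Qed.

Lemma prod_row_split x a c : (c <= a)%N ->
  \prod_(1 <= j < a.+1) (j%:R - 1 + x - c%:R) =
  \prod_(1 <= k < c.+1) (x - k%:R) * \prod_(c.+1 <= j < a.+1) (a%:R - j%:R + x).
Proof.
move=> le_ca; rewrite (big_cat_nat (n := c.+1)) //=.
congr (_ * _); rewrite big_nat_rev /=; apply: eq_big_nat => j /andP[_ lt_j].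
  by rewrite add1n subSS natrB 1?ltnW //; ring.
by rewrite addnS subSS natrB; [ring | rewrite ltnS in lt_j; rewrite (leq_trans lt_j) ?leq_addl].
Qed.

Lemma row_ratio x (a c k : nat) : generic x ->
  \prod_(1 <= j < a.+1)
     ((j%:R - 1 + x + c%:R - k%:R + 1) / (j%:R - 1 + x + c%:R - k%:R)) =
  (a%:R + c%:R - k%:R + x) / (x + c%:R - k%:R).
Proof.
move=> x_gen; rewrite big_add1 /=.
rewrite (eq_bigr (fun j => (x + c%:R - k%:R + j.+1%:R) / (x + c%:R - k%:R + j%:R))); last first.
  by move=> j _; congr (_ / _); ring.
rewrite (telescope_prodf_leq (f := fun j => x + c%:R - k%:R + j%:R)) //.
- by congr (_ / _); ring.
- by move=> j _; apply: (@generic_neq0 _ x _ (c + j) k x_gen); rewrite natrD; ring.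
Qed.

Lemma Xweight_row m x a : generic x -> is_partition m -> (part m 1 <= a)%N ->
  content_prod m x * \prod_(1 <= j < a.+1) Xweight m (j%:R - 1 + x) =
  content_prod m (x - 1) * hook_row a m x.
Proof.
move=> x_gen m_part le_ma.
rewrite /Xweight big_split /= [X in _ * (_ * X)]exchange_big /=.
rewrite (eq_bigr _ (fun k _ => row_ratio a (conjp m k) k x_gen)).
rewrite prod_row_split // hook_row_split //.
set Q := \prod_(1 <= k < (part m 1).+1) ((_ + _ - _ + x) / _).
have <- : \prod_(1 <= k < (part m 1).+1) (x + (conjp m k)%:R - k%:R) * Q =
          \prod_(1 <= k < (part m 1).+1) (a%:R + (conjp m k)%:R - k%:R + x).
  rewrite -big_split; apply: eq_bigr => k _ /=; rewrite mulrC divfK //.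
  by apply: (@generic_neq0 _ x _ (conjp m k) k x_gen); ring.
by rewrite !mulrA content_prod_shift //; ring.
Qed.

Lemma Xlm_cons_l a l m x : generic x -> is_partition m -> (part m 1 <= a)%N ->
  Xlm (a :: l) m x = Xlm l m (x - 1) * hook_row a m x.
Proof.
move=> x_gen m_part le_ma.
rewrite !Xlm_Xweight prod_diag_cons mulrA Xweight_row //.
rewrite (eq_prod_diag (g := fun i j => Xweight m (j%:R - i%:R + (x - 1)))); first ring.
by move=> i j _ _; congr (Xweight m _); ring.
Qed.

Lemma content_prod_cons b m x :
  content_prod (b :: m) x = \prod_(1 <= j < b.+1) (j%:R - 1 - x) * content_prod m (x + 1).
Proof.
by rewrite /content_prod prod_diag_cons; congr (_ * _); apply: eq_prod_diag => i j _ _; ring.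
Qed.

Lemma Xweight_cons b m y : is_partition (b :: m) -> generic y ->
  Xweight (b :: m) y = Xweight m (y + 1) * ((y - b%:R) / (y + 1 - b%:R)).
Proof.
move=> m_part y_gen.
have m'_part : is_partition m := path_sorted m_part.
have le_mb : (part m 1 <= b)%N := part_leq_head 2 m_part.
rewrite /Xweight part_head.
rewrite (eq_big_nat _ _ (F2 := fun k =>
    (y + 1 + (conjp m k)%:R - k%:R + 1) / (y + 1 + (conjp m k)%:R - k%:R))); last first.
  by move=> k /andP[_]; rewrite ltnS conjp_cons => -> /=; congr (_ / _); rewrite natrD; ring.
rewrite (big_cat_nat (n := (part m 1).+1)) //= [X in _ * (_ * X)]big_add1 /=.
rewrite [X in _ * (_ * X)](eq_big_nat _ _
    (F2 := fun k => ((y + 1 - k.+1%:R) / (y + 1 - k%:R))^-1)); last first.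
  by move=> k /andP[lt_mk _]; rewrite conjp_eq0 // invf_div; congr (_ / _); ring.
rewrite prodfV (telescope_prodf_leq (f := fun k => y + 1 - k%:R)) //; last first.
  by move=> k _; apply: (@generic_neq0 _ y _ 1 k y_gen); ring.
have nz_yb : y + 1 - b%:R != 0 by apply: (@generic_neq0 _ y _ 1 b y_gen); ring.
have nz_ym : y + 1 - (part m 1)%:R != 0 by apply: (@generic_neq0 _ y _ 1 (part m 1) y_gen); ring.
by field; rewrite nz_yb nz_ym.
Qed.

Lemma column_ratio x (b j nu : nat) : generic x ->
  \prod_(1 <= i < nu.+1) ((j%:R - i%:R + x - b%:R) / (j%:R - i%:R + x + 1 - b%:R)) =
  (j%:R - nu%:R + x - b%:R) / (j%:R + x - b%:R).
Proof.
move=> x_gen; rewrite big_add1 /=.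
rewrite (eq_bigr (fun i => (j%:R - i.+1%:R + x - b%:R) / (j%:R - i%:R + x - b%:R))); last first.
  by move=> i _; congr (_ / _); ring.
rewrite (telescope_prodf_leq (f := fun i => j%:R - i%:R + x - b%:R)) //.
- by congr (_ / _); ring.
- by move=> i _; apply: (@generic_neq0 _ x _ j (i + b) x_gen); rewrite natrD; ring.
Qed.

Lemma hook_row_opp_columns b l x : generic x -> is_partition l -> (part l 1 <= b)%N ->
  \prod_(1 <= j < b.+1) (j%:R - 1 - x) *
  prod_diag l (fun i j => (j%:R - i%:R + x - b%:R) / (j%:R - i%:R + x + 1 - b%:R)) =
  hook_row b l (- x).
Proof.
move=> x_gen l_part le_lb.
rewrite prod_diag_columns // (eq_bigr _ (fun j _ => column_ratio b j (conjp l j) x_gen)).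
have -> : \prod_(1 <= j < b.+1) (j%:R - 1 - x) = \prod_(1 <= j < b.+1) (b%:R - j%:R - x).
  rewrite big_nat_rev /=; apply: eq_big_nat => j /andP[_ lt_jb].
  by rewrite add1n subSS natrB 1?ltnW //; ring.
rewrite hook_row_split // (big_cat_nat (n := (part l 1).+1)) //=.
have <- : \prod_(1 <= j < (part l 1).+1) (b%:R - j%:R - x) *
          \prod_(1 <= j < (part l 1).+1)
             ((j%:R - (conjp l j)%:R + x - b%:R) / (j%:R + x - b%:R)) =
          \prod_(1 <= j < (part l 1).+1) (b%:R + (conjp l j)%:R - j%:R - x).
  rewrite -big_split; apply: eq_bigr => j _ /=.
  have nz_jb : j%:R + x - b%:R != 0 by apply: (@generic_neq0 _ x _ j b x_gen); ring.
  by field.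
ring.
Qed.

Lemma Xlm_cons_r l b m x : generic x -> is_partition l -> is_partition (b :: m) ->
    (part l 1 <= b)%N ->
  Xlm l (b :: m) x = Xlm l m (x + 1) * hook_row b l (- x).
Proof.
move=> x_gen l_part m_part le_lb.
rewrite !Xlm_Xweight content_prod_cons -hook_row_opp_columns //.
rewrite (eq_prod_diag (g := fun i j => Xweight m (j%:R - i%:R + (x + 1)) *
   ((j%:R - i%:R + x - b%:R) / (j%:R - i%:R + x + 1 - b%:R)))).
  by rewrite prod_diagM; ring.
move=> i j _ _; rewrite Xweight_cons //; last by rewrite addrC; apply: genericD.
by congr (Xweight m _ * (_ / _)); ring.
Qed.

End XRecursion.

Lemma Xlm_eq_Zlm_generic (F : fieldType) n (x : F) l m :
    (size l + size m <= n)%N -> generic x -> is_partition l -> is_partition m ->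
  Xlm l m x = Zlm l m x.
Proof.
elim: n x l m => [|n IH] x l m.
  by case: l m => [|? ?] [|? ?] // _ _ _ _; rewrite /Xlm /Zlm !prod_diag_nil.
move=> le_n x_gen l_part m_part.
have drop_row_r b m' : m = b :: m' -> (part l 1 <= b)%N -> Xlm l m x = Zlm l m x.
  move=> def_m le_lb; rewrite def_m in le_n m_part *.
  rewrite Xlm_cons_r // Zlm_cons_r // (IH (x + 1)) //.
  - by rewrite /= addnS in le_n.
  - exact: generic_addr1.
  - exact: path_sorted m_part.
case: l le_n l_part drop_row_r => [|a l] le_n l_part drop_row_r.
  case: m m_part le_n drop_row_r => [|b m] _ _ drop_row_r.
    by rewrite /Xlm /Zlm !prod_diag_nil.
  by apply: drop_row_r.
have [le_ma | lt_am] := leqP (part m 1) a.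
  rewrite Xlm_cons_l // Zlm_cons_l // (IH (x - 1)) //.
  - exact: generic_subr1.
  - exact: path_sorted l_part.
case: m m_part le_n lt_am drop_row_r => [|b m] // _ _ lt_ab drop_row_r.
exact: drop_row_r (ltnW lt_ab).
Qed.

Lemma generic_xind : generic xind.
Proof.
move=> p q.
have -> : (p%:R - q%:R : ratfun) = FracField.tofrac ((p%:R - q%:R)%:P : {poly rat}).
  by rewrite !rmorphB /= !rmorph_nat.
by rewrite /xind -tofracD tofrac_eq0 -size_poly_eq0 size_XaddC.
Qed.

Theorem lemma4p1 (l m : seq nat) :
  is_partition l -> is_partition m ->
  Xlm l m xind = Zlm l m xind.
Proof.
by move=> l_part m_part; apply: (Xlm_eq_Zlm_generic (leqnn _) generic_xind).
Qed.
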